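(* Let $G$ be a regular subsequential method of sequential convergence. If a subset $F$ of $\mathbb{R}$ is $G$-sequentially compact, then $F$ is Abel sequentially compact.
   Context: Let $s$ be the space of all real sequences. A method is a linear function $G$ defined on a linear subspace $c_G\subseteq s$ into $\mathbb{R}$; $\mathbf{p}$ is $G$-convergent to $\ell$ if $\mathbf{p}\in c_G$ and $G(\mathbf{p})=\ell$. $G$ is regular if every convergent sequence $\mathbf{p}$ is $G$-convergent with $G(\mathbf{p})=\lim\mathbf{p}$; $G$ is subsequential if whenever $G(\mathbf{p})=\ell$ there is a subsequence of $\mathbf{p}$ converging (in the ordinary sense) to $\ell$. $F$ is $G$-sequentially compact if every sequence of points of $F$ has a $G$-convergent subsequence $\mathbf{r}$ with $G(\mathbf{r})\in F$. A sequence $(p_n)_{n\ge0}$ is Abel convergent to $\ell$ if $\sum_{k=0}^{\infty}p_k x^k$ converges for every $0\le x<1$ and $\lim_{x\to 1^-}(1-x)\sum_{k=0}^{\infty}p_k x^k=\ell$. $F$ is Abel sequentially compact if every sequence of points of $F$ has a subsequence Abel convergent to a limit in $F$. *)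

From Stdlib Require Import Reals.
From Coquelicot Require Import Coquelicot.
Open Scope R_scope.

Definition rseq := nat -> R.

(* A method: a linear function G defined on a linear subspace cG of s. *)
Definition is_method (cG : rseq -> Prop) (G : rseq -> R) : Prop :=
  cG (fun _ => 0) /\
  (forall p q, cG p -> cG q -> cG (fun n => p n + q n)) /\
  (forall (a : R) p, cG p -> cG (fun n => a * p n)) /\
  (forall p q, cG p -> cG q -> G (fun n => p n + q n) = G p + G q) /\
  (forall (a : R) p, cG p -> G (fun n => a * p n) = a * G p).

Definition strict_incr (phi : nat -> nat) : Prop :=
  forall n, (phi n < phi (S n))%nat.

Definition regular_method (cG : rseq -> Prop) (G : rseq -> R) : Prop :=
  forall (p : rseq) (l : R), is_lim_seq p l -> cG p /\ G p = l.

Definition subsequential_method (cG : rseq -> Prop) (G : rseq -> R) : Prop :=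
  forall p : rseq, cG p ->
    exists phi : nat -> nat, strict_incr phi /\ is_lim_seq (fun n => p (phi n)) (G p).

Definition G_seq_compact (cG : rseq -> Prop) (G : rseq -> R) (F : R -> Prop) : Prop :=
  forall x : rseq, (forall n, F (x n)) ->
    exists phi : nat -> nat, strict_incr phi /\
      cG (fun n => x (phi n)) /\ F (G (fun n => x (phi n))).

Definition abel_convergent (p : rseq) (l : R) : Prop :=
  (forall x : R, 0 <= x < 1 -> ex_series (fun k => p k * x ^ k)) /\
  filterlim (fun x => (1 - x) * Series (fun k => p k * x ^ k)) (at_left 1) (locally l).

Definition abel_seq_compact (F : R -> Prop) : Prop :=
  forall x : rseq, (forall n, F (x n)) ->
    exists phi : nat -> nat, exists l : R, strict_incr phi /\
      abel_convergent (fun n => x (phi n)) l /\ F l.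

(* A G-convergent subsequence with G-limit in F has, G being subsequential, a
   further subsequence converging to that limit, and Abel summation is regular:
   for p -> l one has (1 - x) sum p_k x^k = l + (1 - x) sum (p_k - l) x^k, and
   splitting the last series at an index N beyond which |p_k - l| <= e bounds
   it by (1 - x) sum_(k<=N) |p_k - l| + e, which is below 2e for x close to 1. *)
From Stdlib Require Import Reals Lra Lia.
From Coquelicot Require Import Coquelicot.
Open Scope R_scope.

Lemma strict_incr_lt (phi : nat -> nat) :
  strict_incr phi -> forall m n, (m < n)%nat -> (phi m < phi n)%nat.
Proof.
  intros Hphi m n Hmn; induction Hmn as [|n _ IH]; [apply Hphi|].
  specialize (Hphi n); lia.
Qed.

Lemma strict_incr_comp (phi psi : nat -> nat) :
  strict_incr phi -> strict_incr psi -> strict_incr (fun n => phi (psi n)).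
Proof. intros Hphi Hpsi n; apply strict_incr_lt; auto. Qed.

Lemma is_lim_seq_eventually_le (a : rseq) (e : R) :
  is_lim_seq a 0 -> 0 < e -> exists N, forall k, (N <= k)%nat -> Rabs (a k) <= e.
Proof.
  intros Ha He.
  destruct (proj2 (is_lim_seq_spec a 0) Ha (mkposreal e He)) as [N HN].
  exists N; intros k Hk; specialize (HN k Hk); simpl in HN.
  rewrite Rminus_0_r in HN; lra.
Qed.

Section PowerSeriesBounds.

Variable x : R.
Hypothesis Hx : 0 <= x < 1.

Lemma is_series_scal_geom (c : R) : is_series (fun k => c * x ^ k) (c / (1 - x)).
Proof.
  apply (is_series_scal_l c (fun k => x ^ k)), is_series_geom.
  rewrite Rabs_pos_eq; lra.
Qed.

Variables (a : rseq) (N : nat) (e : R).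
Hypothesis Ha : forall k, (N <= k)%nat -> Rabs (a k) <= e.

Lemma Rabs_tail_term_le (k : nat) :
  Rabs (a (S N + k)%nat * x ^ (S N + k)) <= e * x ^ k.
Proof.
  assert (Hxn : forall n, 0 <= x ^ n <= 1).
  { intros n; split; [apply pow_le; lra|].
    rewrite <- (pow1 n); apply pow_incr; lra. }
  rewrite Rabs_mult, (Rabs_pos_eq (x ^ _)) by apply Hxn.
  rewrite pow_add.
  assert (Hak : Rabs (a (S N + k)%nat) <= e) by (apply Ha; lia).
  pose proof (Rabs_pos (a (S N + k)%nat)).
  pose proof (Hxn (S N)); pose proof (Hxn k).
  apply Rle_trans with (e * (x ^ S N * x ^ k)); [apply Rmult_le_compat_r; nra|].
  apply Rmult_le_compat_l; nra.
Qed.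

Lemma ex_series_tail_abs :
  ex_series (fun k => Rabs (a (S N + k)%nat * x ^ (S N + k))).
Proof.
  apply (@ex_series_le R_AbsRing R_CompleteNormedModule _ (fun k => e * x ^ k)).
  - intros k; change (Rabs (Rabs (a (S N + k)%nat * x ^ (S N + k))) <= e * x ^ k).
    rewrite Rabs_Rabsolu; apply Rabs_tail_term_le.
  - eexists; apply is_series_scal_geom.
Qed.

Lemma ex_series_eventually_bounded : ex_series (fun k => a k * x ^ k).
Proof.
  apply (ex_series_incr_n _ (S N)), ex_series_Rabs, ex_series_tail_abs.
Qed.

Lemma Rabs_Series_le :
  Rabs (Series (fun k => a k * x ^ k)) <= sum_f_R0 (fun k => Rabs (a k)) N + e / (1 - x).
Proof.
  rewrite (Series_incr_n _ (S N)) by (lia || apply ex_series_eventually_bounded).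
  simpl Init.Nat.pred.
  eapply Rle_trans; [apply Rabs_triang|apply Rplus_le_compat].
  - eapply Rle_trans; [apply sum_f_R0_triangle|apply sum_Rle]; intros k _.
    rewrite Rabs_mult, (Rabs_pos_eq (x ^ k)) by (apply pow_le; lra).
    rewrite <- (Rmult_1_r (Rabs (a k))) at 2.
    apply Rmult_le_compat_l; [apply Rabs_pos|].
    rewrite <- (pow1 k); apply pow_incr; lra.
  - eapply Rle_trans; [apply Series_Rabs, ex_series_tail_abs|].
    rewrite <- (is_series_unique _ _ (is_series_scal_geom e)).
    apply Series_le; [|eexists; apply is_series_scal_geom].
    intros k; split; [apply Rabs_pos|apply Rabs_tail_term_le].
Qed.

End PowerSeriesBounds.

Lemma abel_convergent_null (a : rseq) : is_lim_seq a 0 -> abel_convergent a 0.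
Proof.
  intros Ha; split.
  { intros x Hx; destruct (is_lim_seq_eventually_le a 1 Ha Rlt_0_1) as [N HN].
    exact (ex_series_eventually_bounded x Hx a N 1 HN). }
  apply filterlim_locally; intros eps.
  assert (He : 0 < eps / 2) by (destruct eps; simpl; lra).
  destruct (is_lim_seq_eventually_le a _ Ha He) as [N HN].
  set (C := sum_f_R0 (fun k => Rabs (a k)) N).
  assert (HC : 0 <= C) by (apply cond_pos_sum; intros; apply Rabs_pos).
  assert (Hdelta : 0 < Rmin 1 (eps / 2 / (C + 1))).
  { apply Rmin_pos; [lra|apply Rdiv_lt_0_compat; lra]. }
  exists (mkposreal _ Hdelta); intros y Hy Hy1; simpl in Hy.
  change (Rabs (y - 1) < Rmin 1 (eps / 2 / (C + 1))) in Hy.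
  change (Rabs ((1 - y) * Series (fun k => a k * y ^ k) - 0) < eps).
  pose proof (Rmin_l 1 (eps / 2 / (C + 1))); pose proof (Rmin_r 1 (eps / 2 / (C + 1))).
  rewrite Rabs_left in Hy by lra.
  assert (Hy0 : 0 <= y < 1) by lra.
  assert (HyC : (1 - y) * (C + 1) < eps / 2).
  { apply Rmult_lt_reg_r with (/ (C + 1)); [apply Rinv_0_lt_compat; lra|].
    replace ((1 - y) * (C + 1) * / (C + 1)) with (1 - y) by (field; lra); lra. }
  pose proof (Rabs_Series_le y Hy0 a N _ HN) as Hbound; fold C in Hbound.
  rewrite Rminus_0_r, Rabs_mult, (Rabs_pos_eq (1 - y)) by lra.
  apply Rle_lt_trans with ((1 - y) * (C + eps / 2 / (1 - y)));
    [apply Rmult_le_compat_l; lra|].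
  replace ((1 - y) * (C + eps / 2 / (1 - y))) with ((1 - y) * C + eps / 2) by (field; lra).
  nra.
Qed.

Lemma abel_convergent_ext (a b : rseq) (l : R) :
  (forall k, a k = b k) -> abel_convergent a l -> abel_convergent b l.
Proof.
  intros Hab [Hex Hlim]; split.
  - intros x Hx; apply (@ex_series_ext R_AbsRing R_NormedModule (fun k => a k * x ^ k)).
    + intros k; now rewrite Hab.
    + now apply Hex.
  - eapply filterlim_ext; [|exact Hlim]; intros x; cbv beta.
    f_equal; apply Series_ext; intros k; now rewrite Hab.
Qed.

Lemma abel_convergent_add_const (a : rseq) (l c : R) :
  abel_convergent a l -> abel_convergent (fun k => a k + c) (l + c).
Proof.
  intros [Hex Hlim].
  assert (Hsplit : forall x, 0 <= x < 1 ->
    ex_series (fun k => a k * x ^ k) /\ ex_series (fun k => c * x ^ k)).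
  { intros x Hx; split; [now apply Hex|eexists; now apply is_series_scal_geom]. }
  assert (Hsum : forall x, 0 <= x < 1 ->
    (1 - x) * Series (fun k => (a k + c) * x ^ k)
    = (1 - x) * Series (fun k => a k * x ^ k) + c).
  { intros x Hx; destruct (Hsplit x Hx) as [Ha Hc].
    rewrite (Series_ext _ (fun k => a k * x ^ k + c * x ^ k)) by (intros; ring).
    rewrite Series_plus, (is_series_unique _ _ (is_series_scal_geom x Hx c)) by assumption.
    field; lra. }
  split.
  - intros x Hx; destruct (Hsplit x Hx) as [Ha Hc].
    apply (@ex_series_ext R_AbsRing R_NormedModule (fun k => a k * x ^ k + c * x ^ k)).
    + intros k; symmetry; apply Rmult_plus_distr_r.
    + now apply (@ex_series_plus R_AbsRing R_NormedModule).
  - apply (filterlim_ext_loc (fun x => (1 - x) * Series (fun k => a k * x ^ k) + c)).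
    + exists (mkposreal 1 Rlt_0_1); intros y Hy Hy1.
      change (Rabs (y - 1) < 1) in Hy; rewrite Rabs_left in Hy by lra.
      symmetry; apply Hsum; lra.
    + apply (filterlim_comp_2 _ _ Rplus Hlim (filterlim_const c)), (filterlim_plus l c).
Qed.

Lemma abel_convergent_of_lim (p : rseq) (l : R) : is_lim_seq p l -> abel_convergent p l.
Proof.
  intros Hp.
  assert (Hnull : is_lim_seq (fun k => p k - l) 0).
  { replace 0 with (l - l) by ring.
    apply (is_lim_seq_minus _ _ l l); [exact Hp|apply is_lim_seq_const|reflexivity]. }
  pose proof (abel_convergent_add_const _ 0 l (abel_convergent_null _ Hnull)) as Habel.
  rewrite Rplus_0_l in Habel.
  apply (abel_convergent_ext _ _ l) with (2 := Habel); intros k; ring.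
Qed.

Theorem theorem13 (cG : rseq -> Prop) (G : rseq -> R) (F : R -> Prop) :
  is_method cG G ->
  regular_method cG G ->
  subsequential_method cG G ->
  G_seq_compact cG G F ->
  abel_seq_compact F.
Proof.
  intros _ _ Hsub Hcomp x Hx.
  destruct (Hcomp x Hx) as [phi [Hphi [HcG HF]]].
  destruct (Hsub _ HcG) as [psi [Hpsi Hlim]].
  exists (fun n => phi (psi n)), (G (fun n => x (phi n))).
  split; [apply strict_incr_comp; auto|split; auto].
  apply abel_convergent_of_lim, Hlim.
Qed.
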